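(* If a partial coloring of an $n\times n$ square $A$ uniquely extends to $L(n,2n-2)$, then there are no rows $i_1\neq i_2$ and columns $j_1\neq j_2$ such that all four entries $(i_1,j_1),(i_1,j_2),(i_2,j_1),(i_2,j_2)$ are uncolored.
   Context: For positive integers $n,k$, let $\mathcal{L}_{n,k}$ be the set of $n\times n$ squares all of whose entries are colored with colors from a fixed set of $k$ colors $\{1,\dots,k\}$ such that any two entries in the same row, or in the same column, have different colors. Entries are indexed $(i,j)$, $i$ the row and $j$ the column. A partial coloring of an $n\times n$ square assigns colors from $\{1,\dots,k\}$ to some of its entries; the remaining entries are called uncolored. A partial coloring extends to $L(n,k)$ if the uncolored entries can be colored so that the resulting fully colored square lies in $\mathcal{L}_{n,k}$ (keeping the given colors), and it uniquely extends to $L(n,k)$ if there is exactly one such way. *)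

From mathcomp Require Import all_boot.
Set Implicit Arguments. Unset Strict Implicit. Unset Printing Implicit Defensive.

(* Colors {1,...,k} are represented by 'I_k (i.e. {0,...,k-1}). *)
Definition square (n k : nat) := 'I_n -> 'I_n -> 'I_k.

Definition in_L (n k : nat) (L : square n k) : Prop :=
  (forall i j1 j2, j1 <> j2 -> L i j1 <> L i j2) /\
  (forall i1 i2 j, i1 <> i2 -> L i1 j <> L i2 j).

(* A partial coloring: None = uncolored. *)
Definition partial (n k : nat) := 'I_n -> 'I_n -> option 'I_k.

Definition extends_to (n k : nat) (P : partial n k) (L : square n k) : Prop :=
  in_L L /\ forall i j c, P i j = Some c -> L i j = c.

Definition extends (n k : nat) (P : partial n k) : Prop :=
  exists L : square n k, extends_to P L.

Definition uniquely_extends (n k : nat) (P : partial n k) : Prop :=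
  extends P /\
  forall L1 L2 : square n k, extends_to P L1 -> extends_to P L2 ->
    forall i j, L1 i j = L2 i j.

(* Let L be the unique completion and let the 2x2 block of rows i1, i2 and
   columns j1, j2 be uncolored.  Outside the block, row i and column j of a
   block cell (i, j) show at most 2n-4 colors, so with 2n-2 colors there is an
   alternative color x_ij <> L i j fitting there.  Uniqueness forbids changing a
   single cell, so x_ij must clash with the block itself: it equals the color of
   one of the two block neighbours of (i, j).  The two diagonals of the block
   have disjoint color sets, hence the alternatives x_ij form a proper coloring
   of the block, and putting them in yields a second completion. *)
From mathcomp Require Import all_boot zify.
Set Implicit Arguments. Unset Strict Implicit.

Lemma injective_on_set2 (T : finType) (U : Type) (f : T -> U) a b :
  f a <> f b -> {in [set a; b] &, injective f}.
Proof.
by move=> fab u v; rewrite !inE => /pred2P[]-> /pred2P[]-> // e; case: fab.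
Qed.

Lemma card_setC_set2 n (a b : 'I_n) : a <> b -> #|~: [set a; b]| = n - 2.
Proof. by move/eqP=> ab; have := cardsC [set a; b]; rewrite cards2 ab card_ord; lia. Qed.

Lemma diagonals_disjoint (T : Type) (a b c d x y : T) :
  b <> a -> b <> d -> c <> a -> c <> d ->
  x = b \/ x = c -> y = a \/ y = d -> x <> y.
Proof. by move=> ba bd ca cd [] -> [] ->. Qed.

Section Recoloring.

Variables n k : nat.
Implicit Types (L R : square n k) (P : partial n k) (I J : {set 'I_n}).

Definition patch L R I J : square n k :=
  fun i j => if (i \in I) && (j \in J) then R i j else L i j.

Definition clash L I J (i j : 'I_n) : {set 'I_k} :=
  [set L i j' | j' in ~: J] :|: [set L i' j | i' in ~: I].

Lemma clash_row L I J i j j' : j' \notin J -> L i j' \in clash L I J i j.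
Proof. by move=> j'J; rewrite in_setU imset_f ?inE. Qed.

Lemma clash_col L I J i j i' : i' \notin I -> L i' j \in clash L I J i j.
Proof. by move=> i'I; rewrite in_setU orbC imset_f ?inE. Qed.

Lemma card_clash L I J i j : #|clash L I J i j| <= #|~: I| + #|~: J|.
Proof.
rewrite addnC.
exact: leq_trans (leq_card_setU _ _) (leq_add (leq_imset_card _ _) (leq_imset_card _ _)).
Qed.

Lemma exists_recoloring L I J :
  (#|~: I| + #|~: J|).+1 < k ->
  exists R, forall i j, R i j \notin L i j |: clash L I J i j.
Proof.
move=> small.
have fresh i j : exists x, x \notin L i j |: clash L I J i j.
  set S := L i j |: clash L I J i j.
  have ltSk : #|S| < k.
    apply: leq_ltn_trans small; rewrite cardsU1 -add1n.
    exact: leq_add (leq_b1 _) (card_clash _ _ _ _ _).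
  have : 0 < #|~: S|.
    by move: ltSk; rewrite -[X in _ < X](card_ord k) -(cardsC S) -[X in X < _]addn0 ltn_add2l.
  by case/card_gt0P=> x; rewrite inE; exists x.
by exists (fun i j => xchoose (fresh i j)) => i j; exact: xchooseP (fresh i j).
Qed.

Lemma in_L_patch L R I J : in_L L ->
  {in I, forall i, {in J &, injective (R i)}} ->
  {in J, forall j, {in I &, injective (R^~ j)}} ->
  {in I, forall i, {in J, forall j, R i j \notin clash L I J i j}} ->
  in_L (patch L R I J).
Proof.
move=> [rowL colL] rowR colR fitR; split.
- move=> i j j' jj'; rewrite /patch.
  have [iI /=|_] := boolP (i \in I); last exact: rowL.
  have [jJ|jJ] := boolP (j \in J); have [j'J|j'J] := boolP (j' \in J) => //=.
  + by move/(rowR i iI j j' jJ j'J).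
  + by move=> e; move: (fitR i iI j jJ); rewrite e clash_row.
  + by move=> e; move: (fitR i iI j' j'J); rewrite -e clash_row.
  + exact: rowL.
- move=> i i' j ii'; rewrite /patch.
  have [jJ|_] := boolP (j \in J); last by rewrite !andbF; exact: colL.
  have [iI|iI] := boolP (i \in I); have [i'I|i'I] := boolP (i' \in I) => /=.
  + by move/(colR j jJ i i' iI i'I).
  + by move=> e; move: (fitR i iI j jJ); rewrite e clash_col.
  + by move=> e; move: (fitR i' i'I j jJ); rewrite -e clash_col.
  + exact: colL.
Qed.

Lemma extends_to_patch P L R I J :
  extends_to P L -> {in I, forall i, {in J, forall j, P i j = None}} ->
  in_L (patch L R I J) -> extends_to P (patch L R I J).
Proof.
move=> [_ keepL] blank inLR; split=> // i j c; rewrite /patch.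
case: (boolP (i \in I)) => [iI|_]; case: (boolP (j \in J)) => [jJ|_] /=;
  [by rewrite blank | exact: keepL ..].
Qed.

Lemma uniquely_extends_patch P L R I J :
  uniquely_extends P -> extends_to P L ->
  {in I, forall i, {in J, forall j, P i j = None}} ->
  in_L (patch L R I J) -> {in I, forall i, {in J, forall j, R i j = L i j}}.
Proof.
move=> [_ uniq] extL blank inLR i iI j jJ.
have := uniq _ _ (extends_to_patch extL blank inLR) extL i j.
by rewrite /patch iI jJ.
Qed.

(* Changing the single uncolored cell (i, j) to [x] would give a second completion. *)
Lemma uniquely_extends_cell_clash P L (i j : 'I_n) x :
  uniquely_extends P -> extends_to P L -> P i j = None -> x != L i j ->
  x \in clash L [set i] [set j] i j.
Proof.
move=> uP extL Pij; apply: contraR => fit.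
have inj1 (a : 'I_n) (f : 'I_n -> 'I_k) : {in [set a] &, injective f}.
  by move=> u v; rewrite !inE => /eqP-> /eqP->.
have blank : {in [set i], forall i', {in [set j], forall j', P i' j' = None}}.
  by move=> i' /set1P-> j' /set1P->.
have fits : {in [set i], forall i', {in [set j], forall j', x \notin clash L [set i] [set j] i' j'}}.
  by move=> i' /set1P-> j' /set1P->.
have inLx := in_L_patch extL.1 (fun _ _ => inj1 _ _) (fun _ _ => inj1 _ _) fits.
by apply/eqP; apply: (uniquely_extends_patch uP extL blank inLx); rewrite inE.
Qed.

Lemma uniquely_extends_block_neighbour P L (i i' j j' : 'I_n) x :
  uniquely_extends P -> extends_to P L -> P i j = None -> x != L i j ->
  x \notin clash L [set i; i'] [set j; j'] i j -> x = L i j' \/ x = L i' j.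
Proof.
move=> uP extL Pij xL fit.
have := uniquely_extends_cell_clash uP extL Pij xL.
rewrite in_setU => /orP[] /imsetP[q]; rewrite !inE => qN xq; subst x; [left | right].
- have : q \in [set j; j'] by apply: contraR fit => qJ; rewrite clash_row.
  by rewrite !inE (negbTE qN) => /eqP->.
- have : q \in [set i; i'] by apply: contraR fit => qI; rewrite clash_col.
  by rewrite !inE (negbTE qN) => /eqP->.
Qed.

Lemma in_L_patch_set2 L R (i1 i2 j1 j2 : 'I_n) :
  in_L L -> i1 <> i2 -> j1 <> j2 ->
  R i1 j1 = L i1 j2 \/ R i1 j1 = L i2 j1 -> R i1 j2 = L i1 j1 \/ R i1 j2 = L i2 j2 ->
  R i2 j1 = L i1 j1 \/ R i2 j1 = L i2 j2 -> R i2 j2 = L i1 j2 \/ R i2 j2 = L i2 j1 ->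
  (forall i j, R i j \notin clash L [set i1; i2] [set j1; j2] i j) ->
  in_L (patch L R [set i1; i2] [set j1; j2]).
Proof.
move=> inL i12 j12 R11 R12 R21 R22 fits; have [rowL colL] := inL.
have off_diagonal := diagonals_disjoint (rowL _ _ _ (nesym j12)) (colL _ _ _ i12)
  (colL _ _ _ (nesym i12)) (rowL _ _ _ j12).
apply: in_L_patch => //.
- move=> i /set2P[]->; apply: injective_on_set2.
  + exact: off_diagonal R11 R12.
  + exact: nesym (off_diagonal _ _ R22 R21).
- move=> j /set2P[]->; apply: injective_on_set2.
  + exact: off_diagonal R11 R21.
  + exact: nesym (off_diagonal _ _ R22 R12).
- by move=> i _ j _; exact: fits.
Qed.

End Recoloring.

Theorem lemma2 (n : nat) (P : partial n (2 * n - 2)) :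
  uniquely_extends P ->
  ~ (exists (i1 i2 j1 j2 : 'I_n), i1 <> i2 /\ j1 <> j2 /\
       P i1 j1 = None /\ P i1 j2 = None /\ P i2 j1 = None /\ P i2 j2 = None).
Proof.
move=> uP [i1 [i2 [j1 [j2 [i12 [j12 [P11 [P12 [P21 P22]]]]]]]]].
have [L extL] := uP.1.
set I := [set i1; i2]; set J := [set j1; j2].
have [R fresh] : exists R, forall i j, R i j \notin L i j |: clash L I J i j.
  apply: exists_recoloring; rewrite !card_setC_set2 //.
  by have := max_card I; rewrite card_ord cards2; move/eqP: i12 => /negbTE ->; lia.
have moved i j : R i j != L i j by have := fresh i j; rewrite in_setU1 negb_or => /andP[].
have fits i j : R i j \notin clash L I J i j by have := fresh i j; rewrite in_setU1 negb_or => /andP[].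
have R11 := uniquely_extends_block_neighbour uP extL P11 (moved _ _) (fits i1 j1).
have R12 : R i1 j2 = L i1 j1 \/ R i1 j2 = L i2 j2.
  apply: (uniquely_extends_block_neighbour (i' := i2) (j' := j1) uP extL P12 (moved _ _)).
  by rewrite [[set j2; j1]]setUC; exact: fits.
have R21 : R i2 j1 = L i1 j1 \/ R i2 j1 = L i2 j2.
  apply/or_comm/(uniquely_extends_block_neighbour uP extL P21 (moved _ _)).
  by rewrite [[set i2; i1]]setUC; exact: fits.
have R22 : R i2 j2 = L i1 j2 \/ R i2 j2 = L i2 j1.
  apply/or_comm/(uniquely_extends_block_neighbour uP extL P22 (moved _ _)).
  by rewrite [[set i2; i1]]setUC [[set j2; j1]]setUC; exact: fits.
have inLR := in_L_patch_set2 extL.1 i12 j12 R11 R12 R21 R22 fits.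
have blank : {in I, forall i, {in J, forall j, P i j = None}}.
  by move=> i /set2P[]-> j /set2P[]->.
by have := moved i1 j1; rewrite (uniquely_extends_patch uP extL blank inLR) ?eqxx ?setU11.
Qed.
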